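(* Let $n\geq 2$ and let $R$ be the unital associative ring $\langle x,y \mid x^n=0,\ y^n=0,\ xy+y^{n-1}x^{n-1}=1\rangle$. For $0\leq i,j<n$ put $a_{i,j}=y^ix^j-y^{i+1}x^{j+1}\in R$. Then for all $0\leq i,j,p,q<n$ we have $a_{i,j}a_{p,q}=0$ if $j\neq p$ and $a_{i,j}a_{p,q}=a_{i,q}$ if $j=p$. Moreover $$1=\sum_{i=0}^{n-1}a_{i,i},\qquad x=\sum_{i=0}^{n-2}a_{i,i+1},\qquad y=\sum_{i=0}^{n-2}a_{i+1,i}.$$
   Context: $R$ denotes the quotient of the free unital associative ring $\mathbb{Z}\langle x,y\rangle$ by the two-sided ideal generated by $x^n$, $y^n$ and $xy+y^{n-1}x^{n-1}-1$; $x^0=y^0=1$. *)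

From mathcomp Require Import all_boot all_order all_algebra.
Set Implicit Arguments. Unset Strict Implicit. Unset Printing Implicit Defensive.
Import GRing.Theory.
Local Open Scope ring_scope.

Definition R_relations (n : nat) (A : pzRingType) (x y : A) : Prop :=
  [/\ x ^+ n = 0, y ^+ n = 0 & x * y + y ^+ n.-1 * x ^+ n.-1 = 1].

Definition aij (A : pzRingType) (x y : A) (i j : nat) : A :=
  y ^+ i * x ^+ j - y ^+ i.+1 * x ^+ j.+1.

From mathcomp Require Import all_boot all_order all_algebra.
Set Implicit Arguments. Unset Strict Implicit. Unset Printing Implicit Defensive.
Import GRing.Theory.
Local Open Scope ring_scope.

(** The element [e = 1 - y x] is an idempotent killed by [x] on the left and by
    [y] on the right, and [a_{i,j} = y^i e x^j].  Moving [x^j] past [y^p] in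
    [e x^j y^p e] leaves [e y^(p-j) e] when [j <= p] and [0] otherwise, which
    gives the matrix-unit relations; the three sums telescope. *)

Lemma aijE (A : pzRingType) (x y : A) (i j : nat) :
  aij x y i j = y ^+ i * (1 - y * x) * x ^+ j.
Proof. by rewrite /aij mulrBr mulr1 mulrBl (exprSr y) (exprS x) !mulrA. Qed.

Lemma sumr_telescope_ord (V : zmodType) (f : nat -> V) (m : nat) :
  \sum_(i < m) (f i - f i.+1) = f 0%N - f m.
Proof.
rewrite -(big_mkord xpredT (fun i => f i - f i.+1)) -opprB -telescope_sumr //.
by rewrite -sumrN; apply: eq_bigr => i _; rewrite opprB.
Qed.

Section CornerIdempotent.

Variables (n : nat) (A : pzRingType) (x y : A).
Hypotheses (n_gt0 : (0 < n)%N) (xn0 : x ^+ n = 0) (yn0 : y ^+ n = 0).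
Hypothesis xy_rel : x * y + y ^+ n.-1 * x ^+ n.-1 = 1.

Lemma mulxy : x * y = 1 - y ^+ n.-1 * x ^+ n.-1.
Proof. by rewrite -xy_rel addrK. Qed.

Lemma mulyxy : y * x * y = y.
Proof.
rewrite -mulrA mulxy mulrBr mulr1 mulrA -exprS prednK //.
by rewrite yn0 mul0r subr0.
Qed.

Lemma mulxyx : x * y * x = x.
Proof.
rewrite mulxy mulrBl mul1r -mulrA -exprSr prednK //.
by rewrite xn0 mulr0 subr0.
Qed.

Lemma mulx_corner : x * (1 - y * x) = 0.
Proof. by rewrite mulrBr mulr1 mulrA mulxyx subrr. Qed.

Lemma mul_corner_y : (1 - y * x) * y = 0.
Proof. by rewrite mulrBl mul1r mulyxy subrr. Qed.

Lemma corner_idem : (1 - y * x) * (1 - y * x) = 1 - y * x.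
Proof. by rewrite {1}mulrBl mul1r -mulrA mulx_corner mulr0 subr0. Qed.

(* Induction on [b], with [a] general: the correction term
   [x^a y^(n-1) x^(n-1) y^b e] of [x y = 1 - y^(n-1) x^(n-1)] vanishes
   by the induction hypothesis at [a = n-1 > b]. *)
Lemma mulXY_corner (a b : nat) : (b < n)%N ->
  x ^+ a * y ^+ b * (1 - y * x) =
  if (a <= b)%N then y ^+ (b - a) * (1 - y * x) else 0.
Proof.
elim: b a => [|b IH] [|a] b_lt.
- by rewrite !expr0 !mul1r.
- by rewrite expr0 mulr1 exprSr -mulrA mulx_corner mulr0.
- by rewrite expr0 mul1r subn0.
- have b_lt_n : (b < n)%N by apply: ltnW.
  have b_lt_pred : (b < n.-1)%N by rewrite -ltnS prednK.
  have -> : x ^+ a.+1 * y ^+ b.+1 * (1 - y * x)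
      = x ^+ a * (x * y) * (y ^+ b * (1 - y * x)) by rewrite exprSr exprS !mulrA.
  rewrite mulxy mulrBr mulr1 mulrBl.
  have -> : x ^+ a * (y ^+ n.-1 * x ^+ n.-1) * (y ^+ b * (1 - y * x))
      = x ^+ a * y ^+ n.-1 * (x ^+ n.-1 * y ^+ b * (1 - y * x)).
    by rewrite !mulrA.
  by rewrite IH // leqNgt b_lt_pred mulr0 subr0 mulrA IH // ltnS subSS.
Qed.

Lemma mul_corner_XY_corner (j p : nat) : (p < n)%N ->
  (1 - y * x) * (x ^+ j * y ^+ p * (1 - y * x)) =
  if j == p then 1 - y * x else 0.
Proof.
move=> p_lt; rewrite mulXY_corner // leq_eqVlt.
have [<-|_] := eqVneq j p; first by rewrite subnn expr0 mul1r corner_idem.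
case: ltnP => [j_lt|_]; last by rewrite mulr0.
by rewrite -(subnSK j_lt) exprS !mulrA mul_corner_y !mul0r.
Qed.

Lemma mul_aij (i j p q : nat) : (p < n)%N ->
  aij x y i j * aij x y p q = if j == p then aij x y i q else 0.
Proof.
move=> p_lt; rewrite !aijE.
have -> : y ^+ i * (1 - y * x) * x ^+ j * (y ^+ p * (1 - y * x) * x ^+ q)
    = y ^+ i * ((1 - y * x) * (x ^+ j * y ^+ p * (1 - y * x))) * x ^+ q.
  by rewrite !mulrA.
by rewrite mul_corner_XY_corner //; case: eqP; rewrite ?mulrA ?mulr0 ?mul0r.
Qed.

End CornerIdempotent.

Theorem lemma4 (n : nat) (A : pzRingType) (x y : A) :
  (2 <= n)%N -> R_relations n x y ->
  (forall i j p q : nat, (i < n)%N -> (j < n)%N -> (p < n)%N -> (q < n)%N ->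
     aij x y i j * aij x y p q = (if j == p then aij x y i q else 0)) /\
  1 = \sum_(i < n) aij x y i i /\
  x = \sum_(i < n.-1) aij x y i i.+1 /\
  y = \sum_(i < n.-1) aij x y i.+1 i.
Proof.
move=> n_ge2 [xn0 yn0 xy_rel].
have n_gt0 : (0 < n)%N by apply: ltnW.
have n_eq : n.-1.+1 = n by rewrite prednK.
split; first by move=> i j p q _ _ p_lt _; exact: (mul_aij n_gt0 xn0 yn0 xy_rel).
split.
  rewrite /aij (sumr_telescope_ord (fun i => y ^+ i * x ^+ i)).
  by rewrite mul1r xn0 mulr0 subr0.
split.
  rewrite /aij (sumr_telescope_ord (fun i => y ^+ i * x ^+ i.+1)).
  by rewrite mul1r n_eq xn0 mulr0 subr0.
rewrite /aij (sumr_telescope_ord (fun i => y ^+ i.+1 * x ^+ i)).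
by rewrite mulr1 n_eq yn0 mul0r subr0.
Qed.
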